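(* Let $\pi_n=\mathbb P(\Gamma\notin\mathcal T)$ for $\Gamma\in G(n,\tfrac12)$, let $f(n)=2n\sum_{i=0}^n\binom ni 2^{-n-\binom i2}$, let $t(n)$ be the number of graphs in $\mathcal T$ on the vertex set $\{1,\dots,n\}$, and let $c(n)$ be the total number of cliques (including the empty clique and single vertices) in all these $t(n)$ graphs. Then for every $n$: (1) $\pi_{2n}\le\pi_n^2+f(n)$; (2) $\pi_{2n}\le\pi_n^2+2\pi_n(1-\pi_n)\frac{n\,c(n)}{2^n t(n)}+(1-\pi_n)^2$; (3) $\pi_{n+1}\le\pi_n+f(n)$.
   Context: $G(n,p)$: random simplicial graphs on $n$ labelled vertices, each edge independently present with probability $p$. $\mathcal T$ is the smallest class of finite simplicial graphs containing $K_{2,2}$, closed under adding a new vertex adjacent exactly to the vertices of an induced subgraph which is not a clique, and closed under gluing two members along a common induced subgraph which is not a clique (optionally adding edges between vertices of the two non-shared parts). *)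

From HB Require Import structures.
From mathcomp Require Import all_boot all_order all_algebra.
From Stdlib Require Import ClassicalEpsilon.
Set Implicit Arguments. Unset Strict Implicit. Unset Printing Implicit Defensive.
Import GRing.Theory Num.Theory.

(* A simple graph on a finite vertex type V is represented by its edge set
   E : {set {set V}}, every edge being a 2-element set of vertices. *)
Definition is_graph (V : finType) (E : {set {set V}}) : bool :=
  [forall s in E, #|s| == 2].

Definition adj (V : finType) (E : {set {set V}}) (x y : V) : bool :=
  [set x; y] \in E.

Definition is_clique (V : finType) (E : {set {set V}}) (S : {set V}) : bool :=
  [forall x in S, forall y in S, (x != y) ==> adj E x y].

Definition induced (V : finType) (E : {set {set V}}) (A : {set V})
  : {set {set {x : V | x \in A}}} :=
  [set s : {set {x : V | x \in A}} | (val @: s) \in E].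

Definition img_graph (V W : finType) (f : V -> W) (E : {set {set V}})
  : {set {set W}} := [set f @: s | s : {set V} in E].

(* K_{2,2} on vertex set bool * bool: parts are {x | x.1 = false}, {x | x.1 = true}. *)
Definition K22 : {set {set (bool * bool)%type}} :=
  [set s : {set (bool * bool)%type} |
     [exists x : (bool * bool)%type, exists y : (bool * bool)%type,
        (s == [set x; y]) && (x.1 != y.1)]].

(* Add a new vertex (None) adjacent exactly to the vertices of S. *)
Definition cone (V : finType) (E : {set {set V}}) (S : {set V})
  : {set {set option V}} :=
  [set (@Some V) @: s | s : {set V} in E] :|: [set [set None; Some x] | x in S].

(* The class T (closed under isomorphism, as a class of graphs). *)
Inductive inT : forall V : finType, {set {set V}} -> Prop :=
| T_K22 : inT K22
| T_iso (V W : finType) (f : V -> W) (E : {set {set V}}) :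
    bijective f -> inT E -> inT (img_graph f E)
| T_cone (V : finType) (E : {set {set V}}) (S : {set V}) :
    inT E -> ~~ is_clique E S -> inT (cone E S)
| T_glue (V : finType) (E : {set {set V}}) (A B : {set V}) :
    is_graph E -> A :|: B = setT ->
    inT (induced E A) -> inT (induced E B) ->
    ~~ is_clique E (A :&: B) -> inT E.

(* Boolean version (classical) to allow counting. *)
Definition inTb (V : finType) (E : {set {set V}}) : bool :=
  if excluded_middle_informative (inT E) then true else false.

Definition graphs (n : nat) : {set {set {set 'I_n}}} :=
  [set E : {set {set 'I_n}} | is_graph E].

Definition Tgraphs (n : nat) : {set {set {set 'I_n}}} :=
  [set E in graphs n | inTb E].

Definition tcount (n : nat) : nat := #|Tgraphs n|.

Definition ccount (n : nat) : nat :=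
  \sum_(E in Tgraphs n) #|[set S : {set 'I_n} | is_clique E S]|.

(* pi_n = P(Gamma notin T) for Gamma in G(n,1/2), i.e. uniform on graphs n. *)
Definition pi_n (n : nat) : rat :=
  (#|[set E in graphs n | ~~ inTb E]|)%:R / (#|graphs n|)%:R.

Definition fn (n : nat) : rat :=
  (2 * n)%:R * \sum_(i < n.+1) ('C(n, i))%:R / ((2 ^ (n + 'C(i, 2)))%:R).

From HB Require Import structures.
From mathcomp Require Import all_boot all_order all_algebra.
From mathcomp Require Import zify ring.
From Stdlib Require Import ClassicalEpsilon.
Import Order.TTheory GRing.Theory Num.Theory.
Set Implicit Arguments. Unset Strict Implicit. Unset Printing Implicit Defensive.

(* If a graph E is in T on a vertex set A, and every vertex v
   outside A has a non-clique neighbourhood inside A, then E is in T: add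
   the outside vertices one at a time, each time gluing the graph built so
   far with a cone over a non-clique, along a non-clique ([inT_extend]).
   Hence, when V is the disjoint union of copies of X and Y and E is not in
   T although its X-part is, some y in Y is clique-linked: its neighbours in
   X form a clique of the X-part ([clique_linked_of_notT]).

   Graphs on V correspond bijectively to triples (X-part, Y-part,
   crossing edges) ([count_split]).  For a fixed X-part G and a fixed y, the
   crossing edge sets making y clique-linked number #cliques(G) times
   2^(|X||Y| - |X|); a union bound over y gives [count_clique_linked].  The
   total number of cliques over all graphs on X is #graphs(X) times
   sum_i C(|X|,i) 2^-C(i,2) ([all_cliquesE]).

   Combining the two, [SplitBounds] bounds the number of graphs outside T
   on a split vertex set in three ways; specialised to 'I_(2n) = 'I_n + 'I_n
   and to 'I_(n+1) = 'I_n + 'I_1 and divided by the number of graphs, they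
   give the three inequalities of the theorem. *)

(* The graph pulled back along i : X -> V; for injective i it is a copy
   of the subgraph of E induced on the range of i. *)
Definition pull (X V : finType) (i : X -> V) (E : {set {set V}}) : {set {set X}} :=
  [set s : {set X} | i @: s \in E].

Lemma induced_pull (V : finType) (E : {set {set V}}) (A : {set V}) :
  induced E A = pull val E.
Proof. by []. Qed.

Lemma adjC (V : finType) (E : {set {set V}}) x y : adj E x y = adj E y x.
Proof. by rewrite /adj setUC. Qed.

Lemma adj_pull (X V : finType) (i : X -> V) E x y :
  adj (pull i E) x y = adj E (i x) (i y).
Proof. by rewrite /adj /pull inE imsetU1 imset_set1. Qed.

Lemma graph_pull (X V : finType) (i : X -> V) E :
  injective i -> is_graph E -> is_graph (pull i E).
Proof.
move=> i_inj /forall_inP gE; apply/forall_inP => s; rewrite inE => /gE.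
by rewrite card_imset.
Qed.

Lemma graph_edge (V : finType) (E : {set {set V}}) s :
  is_graph E -> s \in E -> exists x y, x != y /\ s = [set x; y].
Proof. by move=> /forall_inP gE /gE /cards2P. Qed.

Lemma cliqueP (V : finType) (E : {set {set V}}) (S : {set V}) :
  reflect (forall x y, x \in S -> y \in S -> x != y -> adj E x y) (is_clique E S).
Proof.
apply: (iffP forall_inP) => [H x y xS yS xy | H x xS].
  exact: (implyP (forall_inP (H x xS) y yS) xy).
by apply/forall_inP => y yS; apply/implyP; exact: H.
Qed.

Lemma noncliqueP (V : finType) (E : {set {set V}}) (S : {set V}) :
  reflect (exists x y, [/\ x \in S, y \in S, x != y & ~~ adj E x y])
          (~~ is_clique E S).
Proof.
apply: (iffP idP) => [nc | [x [y [xS yS xy nxy]]]]; last first.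
  by apply/negP => /cliqueP cl; rewrite cl in nxy.
case: (pickP [pred p : V * V | [&& p.1 \in S, p.2 \in S, p.1 != p.2 & ~~ adj E p.1 p.2]]).
  by move=> [x y] /and4P [xS yS xy nxy]; exists x, y.
move=> none; case/negP: nc; apply/cliqueP => x y xS yS xy.
by have := none (x, y); rewrite /= xS yS xy => /negbFE.
Qed.

Lemma img_graph_eq (V W : finType) (f : V -> W) E1 E2 :
  injective f -> (forall w, exists x, w = f x) -> is_graph E1 -> is_graph E2 ->
  (forall x y, x != y -> adj E2 (f x) (f y) = adj E1 x y) -> E2 = img_graph f E1.
Proof.
move=> f_inj f_onto g1 g2 fadj; apply/setP => s; apply/idP/imsetP.
  move=> sE; have [a [b [ab Ds]]] := graph_edge g2 sE.
  have [x Dx] := f_onto a; have [y Dy] := f_onto b; subst s a b.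
  have xy : x != y by apply: contraNneq ab => ->.
  exists [set x; y]; last by rewrite imsetU1 imset_set1.
  by have := fadj x y xy; rewrite /adj sE.
case=> t tE ->; have [x [y [xy Dt]]] := graph_edge g1 tE.
rewrite Dt imsetU1 imset_set1; have := fadj x y xy.
by rewrite /adj -Dt tE => ->.
Qed.

Lemma inT_iso (V W : finType) (f : V -> W) E1 E2 :
  bijective f -> is_graph E1 -> is_graph E2 ->
  (forall x y, x != y -> adj E2 (f x) (f y) = adj E1 x y) -> inT E1 <-> inT E2.
Proof.
move=> f_bij g1 g2 fadj; have f_inj := bij_inj f_bij.
case: (f_bij) => g fK gK; have g_inj := can_inj gK.
split => T1.
  rewrite (img_graph_eq f_inj _ g1 g2 fadj); first exact: T_iso.
  by move=> w; exists (g w); rewrite gK.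
rewrite (@img_graph_eq _ _ g E2 E1 g_inj _ g2 g1); first by apply: T_iso => //; exists f.
  by move=> x; exists (f x); rewrite fK.
by move=> a b ab; rewrite -(fadj (g a) (g b)) ?gK // (can_eq gK).
Qed.

Lemma card_sig_set (V : finType) (A : {set V}) : #|{: {x | x \in A}}| = #|A|.
Proof. by rewrite card_sig; apply: eq_card => x; rewrite !inE. Qed.

Lemma inT_pull_induced (X V : finType) (i : X -> V) E :
  injective i -> is_graph E -> inT (pull i E) <-> inT (induced E (i @: setT)).
Proof.
move=> i_inj gE.
pose f x : {v | v \in i @: setT} := exist _ (i x) (imset_f i (in_setT x)).
have f_inj : injective f by move=> x y /(congr1 val) /= /i_inj.
apply: (@inT_iso _ _ f).
- by apply: inj_card_bij f_inj _; rewrite card_sig_set card_imset // cardsT.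
- exact: graph_pull.
- exact: graph_pull val_inj gE.
by move=> x y _; rewrite induced_pull !adj_pull.
Qed.

Lemma inT_pull_range (X Z V : finType) (i : X -> V) (j : Z -> V) E :
  injective i -> injective j -> is_graph E -> i @: setT = j @: setT ->
  inT (pull i E) <-> inT (pull j E).
Proof.
move=> i_inj j_inj gE ij.
by rewrite (inT_pull_induced i_inj gE) (inT_pull_induced j_inj gE) ij.
Qed.

Lemma pull_comp (X Y V : finType) (f : Y -> V) (g : X -> Y) E :
  pull g (pull f E) = pull (f \o g) E.
Proof. by apply/setP => s; rewrite !inE imset_comp. Qed.

Lemma pull_id (V : finType) (E : {set {set V}}) : pull id E = E.
Proof. by apply/setP => s; rewrite inE imset_id. Qed.

Lemma adj_cone_some (V : finType) (E : {set {set V}}) S x y :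
  adj (cone E S) (Some x) (Some y) = adj E x y.
Proof.
rewrite /adj /cone inE.
have -> : [set Some x; Some y] \in [set [set None; Some z] | z in S] = false.
  apply/imsetP => -[z _ eq].
  by have := setU11 None [set Some z]; rewrite -eq !inE.
have -> : [set Some x; Some y] = Some @: [set x; y] by rewrite imsetU1 imset_set1.
by rewrite orbF (mem_imset _ _ (imset_inj Some_inj)).
Qed.

Lemma adj_cone_apex (V : finType) (E : {set {set V}}) S y :
  adj (cone E S) None (Some y) = (y \in S).
Proof.
rewrite /adj /cone inE.
have -> : [set None; Some y] \in [set (@Some V) @: s | s : {set V} in E] = false.
  apply/imsetP => -[s _ eq].
  by have := setU11 None [set Some y]; rewrite eq => /imsetP [].
apply/imsetP/idP => [[z zS eq] | yS]; last by exists y.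
by have := setU1r None (set11 (Some y)); rewrite eq !inE /= => /eqP [->].
Qed.

Lemma graph_cone (V : finType) (E : {set {set V}}) S :
  is_graph E -> is_graph (cone E S).
Proof.
move=> /forall_inP gE; apply/forall_inP => s; rewrite inE.
case/orP => /imsetP [t tE ->]; last by rewrite cards2.
by rewrite card_imset; [exact: gE | exact: Some_inj].
Qed.

(* One step: a vertex v whose neighbourhood in A is not a clique can be
   added to an induced subgraph in T, as a cone over that neighbourhood. *)
Lemma inT_add_vertex (V : finType) (E : {set {set V}}) (A : {set V}) v :
  is_graph E -> v \notin A -> inT (induced E A) ->
  ~~ is_clique E [set x in A | adj E v x] -> inT (induced E (v |: A)).
Proof.
move=> gE vA TA nc.
pose S := [set x : {x | x \in A} | adj E v (val x)].
have ncS : ~~ is_clique (induced E A) S.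
  case/noncliqueP: nc => x [y [xS yS xy nxy]].
  move: xS yS; rewrite !inE => /andP [xA vx] /andP [yA vy].
  apply/noncliqueP; exists (exist _ x xA), (exist _ y yA).
  by rewrite !inE /= vx vy xy induced_pull adj_pull.
pose f (o : option {x | x \in A}) : {u | u \in v |: A} :=
  if o is Some x then exist _ (val x) (setU1r v (valP x))
  else exist _ v (setU11 v A).
have f_inj : injective f.
  move=> [a|] [b|] // /(congr1 val) /=.
  - by move/val_inj ->.
  - by move=> eq; case/negP: vA; rewrite -eq; exact: (valP a).
  - by move=> eq; case/negP: vA; rewrite eq; exact: (valP b).
apply: (proj1 (@inT_iso _ _ f (cone (induced E A) S) _ _ _ _ _)) (T_cone TA ncS).
- by apply: inj_card_bij f_inj _; rewrite card_option !card_sig_set cardsU1 vA.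
- by apply: graph_cone; exact: graph_pull val_inj gE.
- exact: graph_pull val_inj gE.
move=> [a|] [b|] // _; rewrite induced_pull adj_pull /=.
- by rewrite adj_cone_some adj_pull.
- by rewrite adjC [in RHS]adjC adj_cone_apex inE.
- by rewrite adj_cone_apex inE.
Qed.

Lemma range_val (V : finType) (A : {set V}) : val @: [set: {x | x \in A}] = A.
Proof.
apply/setP => u; apply/imsetP/idP => [[x _ ->] | uA]; first exact: (valP x).
by exists (exist _ u uA).
Qed.

(* A subset D of C seen twice as a subtype, first of C then of D inside C. *)
Lemma range_val_restrict (V : finType) (C D : {set V}) : D \subset C ->
  (val \o (val : {y | y \in [set x : {x | x \in C} | val x \in D]} -> _)) @: setT = D.
Proof.
move=> DC; apply/setP => u; apply/imsetP/idP => [[y _ ->] | uD].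
  by have := valP y; rewrite inE.
have uC := subsetP DC u uD.
have uD' : exist _ u uC \in [set x : {x | x \in C} | val x \in D] by rewrite inE.
by exists (exist (fun y => y \in [set x : {x | x \in C} | val x \in D]) _ uD').
Qed.

(* The gluing step: for A \subset C and v in C \ A with a non-clique
   neighbourhood in A, the graph on C is glued from the graphs on C \ v and
   on v |: A (a cone); they meet in A, which is not a clique as it contains
   two non-adjacent neighbours of v. *)
Lemma inT_glue_vertex (V : finType) (E : {set {set V}}) (A C : {set V}) v :
  is_graph E -> inT (induced E A) -> A \subset C -> v \in C -> v \notin A ->
  ~~ is_clique E [set x in A | adj E v x] ->
  inT (induced E (C :\ v)) -> inT (induced E C).
Proof.
move=> gE TA AC vC vA link_nc TC'.
have vA_C : v |: A \subset C by rewrite subUset sub1set vC.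
have gC : is_graph (induced E C) by exact: graph_pull val_inj gE.
have vv_inj (B : {set {x | x \in C}}) : injective (val \o (val : {y | y \in B} -> _)).
  by move=> x y /= /val_inj /val_inj.
apply: (@T_glue _ (induced E C) [set x | val x \in C :\ v] [set x | val x \in v |: A] gC).
- apply/setP => x; rewrite !inE; have := valP x; rewrite /= => xC.
  by rewrite xC andbT; case: (val x == v).
- rewrite !induced_pull pull_comp.
  apply: (inT_pull_range val_inj (vv_inj _) gE _).1 TC'.
  by rewrite range_val range_val_restrict // subD1set.
- rewrite !induced_pull pull_comp.
  apply: (inT_pull_range val_inj (vv_inj _) gE _).1 (inT_add_vertex gE vA TA link_nc).
  by rewrite range_val (range_val_restrict vA_C).
case/noncliqueP: link_nc => x [y [xS yS xy nxy]].
move: xS yS; rewrite !inE => /andP [xA _] /andP [yA _].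
have [xC yC] := (subsetP AC x xA, subsetP AC y yA).
have [xv yv] : x != v /\ y != v by split; apply: contraNneq vA => <-.
apply/noncliqueP; exists (exist _ x xC), (exist _ y yC).
by rewrite !inE /= induced_pull adj_pull xy nxy xA yA xv yv xC yC !orbT.
Qed.

(* If E is in T on A and every vertex outside A has a non-clique
   neighbourhood in A, then E is in T: by induction on |C \ A|, the graph on
   every C containing A is in T. *)
Lemma inT_extend (V : finType) (E : {set {set V}}) (A : {set V}) :
  is_graph E -> inT (induced E A) ->
  (forall v, v \notin A -> ~~ is_clique E [set x in A | adj E v x]) -> inT E.
Proof.
move=> gE TA links.
suff TC k (C : {set V}) : A \subset C -> #|C :\: A| = k -> inT (induced E C).
  rewrite -(pull_id E); apply/(inT_pull_induced (@inj_id V) gE).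
  by rewrite imset_id; exact: (TC _ _ (subsetT A) erefl).
elim: k C => [|k IH] C AC.
  move/eqP; rewrite cards_eq0 setD_eq0 => CA.
  by have -> : C = A by apply/eqP; rewrite eqEsubset CA.
move=> CAk; have : 0 < #|C :\: A| by rewrite CAk.
rewrite card_gt0 => /set0Pn [v]; rewrite inE => /andP [vA vC].
apply: (inT_glue_vertex gE TA AC vC vA (links v vA)); apply: IH.
  by apply/subsetP => x xA; rewrite !inE (subsetP AC) // andbT; apply: contraNneq vA => <-.
apply/eq_add_S; rewrite -CAk (cardsD1 v (C :\: A)) in_setD vA vC add1n.
by rewrite setDDl setUC -setDDl.
Qed.

Lemma inT_noncomplete (V : finType) (E : {set {set V}}) :
  inT E -> exists x y : V, x != y /\ ~~ adj E x y.
Proof.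
elim=> {V E} [ | V W f E f_bij _ [x [y [xy nxy]]] | V E S _ [x [y [xy nxy]]] _
             | V E A B _ _ _ _ _ _ nc].
- exists (false, false), (false, true); split => //.
  apply/negP; rewrite /adj inE => /existsP [x /existsP [y /andP [/eqP e ne]]].
  have : x \in [set (false, false); (false, true)] by rewrite e setU11.
  have : y \in [set (false, false); (false, true)] by rewrite e !inE eqxx orbT.
  by rewrite !inE => /orP [] /eqP yE /orP [] /eqP xE; rewrite xE yE in ne.
- have f_inj := bij_inj f_bij; exists (f x), (f y); rewrite (inj_eq f_inj).
  split=> //; apply: contra nxy => /imsetP [s sE eq].
  have : f @: [set x; y] = f @: s by rewrite imsetU1 imset_set1.
  by move/(imset_inj f_inj); rewrite /adj => ->.
- by exists (Some x), (Some y); rewrite adj_cone_some.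
by case/noncliqueP: nc => x [y [_ _ xy nxy]]; exists x, y.
Qed.

Lemma inTbP (V : finType) (E : {set {set V}}) : reflect (inT E) (inTb E).
Proof. by rewrite /inTb; case: excluded_middle_informative => H; constructor. Qed.

Lemma graph_nonempty (T : finType) (E : {set {set T}}) s :
  is_graph E -> s \in E -> exists x, x \in s.
Proof. by move=> gE sE; have [x [y [_ ->]]] := graph_edge gE sE; exists x; exact: setU11. Qed.

Definition graphs_on (T : finType) : {set {set {set T}}} :=
  [set E : {set {set T}} | is_graph E].

Definition column (X Y : finType) (r : {set X * Y}) (y : Y) : {set X} :=
  [set x | (x, y) \in r].

Lemma card_set_sum (T : finType) (Q : pred T) : #|[set t | Q t]| = \sum_t Q t.
Proof.
rewrite -sum1_card big_mkcond /=; apply: eq_bigr => t _; rewrite inE.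
by case: (Q t).
Qed.

Lemma card_sets (T : finType) : #|{: {set T}}| = 2 ^ #|T|.
Proof.
rewrite -[in RHS]cardsT -card_powerset; apply: eq_card => A.
by rewrite powersetE subsetT.
Qed.

(* Prescribing one column of a bipartite edge set to lie in K leaves
   the other |X||Y| - |X| pairs free. *)
Lemma card_column_in (X Y : finType) (y : Y) (K : {set {set X}}) :
  #|[set r : {set X * Y} | column r y \in K]| = #|K| * 2 ^ (#|X| * #|Y| - #|X|).
Proof.
pose Z := [set p : X * Y | p.2 != y].
pose psi r : {set X} * {set X * Y} := (column r y, r :&: Z).
have psi_inj : injective psi.
  move=> r r' [e1 e2]; apply/setP => -[a b].
  case: (b =P y) => [-> | /eqP nb]; first by move/setP/(_ a): e1; rewrite !inE.
  by move/setP/(_ (a, b)): e2; rewrite !inE /= nb !andbT.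
have im : psi @: [set r | column r y \in K] = setX K (powerset Z).
  apply/setP => -[S W]; rewrite !inE /=; apply/imsetP/andP.
    by move=> [r]; rewrite inE => rK [-> ->]; split => //; exact: subsetIr.
  move=> [SK WZ].
  pose r := [set p : X * Y | if p.2 == y then p.1 \in S else p \in W].
  have colr : column r y = S by apply/setP => x; rewrite !inE eqxx.
  exists r; first by rewrite inE colr.
  congr (_, _) => //; apply/setP => p; rewrite !inE; case: (p.2 =P y) => [e | ne] /=.
  - by rewrite andbF; apply/negP => /(subsetP WZ); rewrite inE e eqxx.
  - by rewrite andbT.
rewrite -(card_imset _ psi_inj) im cardsX card_powerset; congr (_ * 2 ^ _).
have col_y : #|[set p : X * Y | p.2 == y]| = #|X|.
  have pair_inj : injective (fun a : X => (a, y)) by move=> a b [].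
  have -> : [set p : X * Y | p.2 == y] = (fun a => (a, y)) @: setT.
    apply/setP => -[a b]; rewrite inE /=.
    by apply/eqP/imsetP => [-> | [a' _ [_ ->]]] //; exists a.
  by rewrite (card_imset _ pair_inj) cardsT.
rewrite -card_prod -(cardsC [set p : X * Y | p.2 == y]) col_y addKn.
by apply: eq_card => p; rewrite !inE.
Qed.

Lemma card_pair (A B : finType) (Q : pred (A * B)) :
  #|[set p | Q p]| = \sum_a #|[set b | Q (a, b)]|.
Proof.
rewrite card_set_sum (eq_bigr (fun a => \sum_b Q (a, b))) => [|a _].
  by rewrite pair_bigA; apply: eq_bigr => -[].
by rewrite card_set_sum.
Qed.

Definition ncliques (T : finType) (G : {set {set T}}) : nat := #|[set S | is_clique G S]|.

Lemma card_exists_le (T I : finType) (Q : I -> pred T) :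
  #|[set t | [exists i, Q i t]]| <= \sum_i #|[set t | Q i t]|.
Proof.
rewrite card_set_sum (eq_bigr (fun i => \sum_t Q i t)) => [|i _]; last by rewrite card_set_sum.
rewrite exchange_big /=; apply: leq_sum => t _.
by case: existsP => [[i Qit] | _] //; rewrite (bigD1 i) //= Qit.
Qed.

Lemma graphs_on_powerset (X : finType) :
  graphs_on X = powerset [set s : {set X} | #|s| == 2].
Proof.
by apply/setP => E; rewrite inE powersetE; apply/forall_inP/subsetP => gE s /gE; rewrite inE.
Qed.

Lemma clique_subset (X : finType) (G : {set {set X}}) (S : {set X}) :
  is_clique G S = ([set s : {set X} | s \subset S & #|s| == 2] \subset G).
Proof.
apply/cliqueP/subsetP => [cl s | sub x y xS yS xy].
  rewrite inE => /andP [sS /cards2P [a [b [ab Ds]]]]; subst s.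
  by apply: cl => //; apply: (subsetP sS); rewrite !inE eqxx ?orbT.
apply: sub; rewrite inE cards2 xy andbT; apply/subsetP => z.
by rewrite !inE => /orP [] /eqP ->.
Qed.

Lemma graphs_on_gt0 (X : finType) : 0 < #|graphs_on X|.
Proof.
rewrite card_gt0; apply/set0Pn; exists set0; rewrite inE.
by apply/forall_inP => s; rewrite inE.
Qed.

Lemma card_graphs_with_clique (X : finType) (S : {set X}) :
  #|[set G in graphs_on X | is_clique G S]| * 2 ^ 'C(#|S|, 2) = #|graphs_on X|.
Proof.
set U := [set s : {set X} | #|s| == 2].
set K := [set s : {set X} | s \subset S & #|s| == 2].
have KU : K \subset U by apply/subsetP => s; rewrite !inE => /andP [].
have -> : [set G in graphs_on X | is_clique G S] = [set G in powerset U | K \subset G].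
  by apply/setP => G; rewrite inE [in RHS]inE clique_subset graphs_on_powerset.
have drop_inj : {in [set G in powerset U | K \subset G] &, injective (fun G => G :\: K)}.
  move=> G G'; rewrite !inE => /andP [_ KG] /andP [_ KG'] eq.
  apply/setP => s; case sK : (s \in K); first by rewrite (subsetP KG) ?(subsetP KG').
  by move/setP/(_ s): eq; rewrite !in_setD sK.
have -> : #|[set G in powerset U | K \subset G]| = #|powerset (U :\: K)|.
  rewrite -(card_in_imset drop_inj); apply: eq_card => W; rewrite powersetE.
  apply/imsetP/idP => [[G] | WUK].
    rewrite !inE => /andP [GU _] ->.
    by apply/subsetP => s; rewrite !in_setD => /andP [-> /(subsetP GU)].
  exists (W :|: K).
    rewrite !inE subsetUr andbT; apply/subsetP => s; rewrite in_setU.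
    by case/orP => [/(subsetP WUK)|/(subsetP KU)] //; rewrite in_setD => /andP [].
  apply/setP => s; rewrite in_setD in_setU; case sK : (s \in K); rewrite ?orbT ?orbF //=.
  by apply/negP => /(subsetP WUK); rewrite in_setD sK.
rewrite !card_powerset graphs_on_powerset card_powerset cardsDS // -expnD.
by rewrite cards_draws subnK // -cards_draws subset_leq_card.
Qed.

Definition all_cliques (X : finType) : nat := \sum_(G in graphs_on X) ncliques G.

Lemma all_cliques_exchange (X : finType) :
  all_cliques X = \sum_(S : {set X}) #|[set G in graphs_on X | is_clique G S]|.
Proof.
rewrite /all_cliques /ncliques (eq_bigr (fun G => \sum_S is_clique G S)) => [|G _]; last first.
  by rewrite card_set_sum.
rewrite exchange_big /=; apply: eq_bigr => S _.
by rewrite card_set_sum [LHS]big_mkcond; apply: eq_bigr => G _; case: (G \in _).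
Qed.

(* The graphs outside T, those in T, and the cliques of the latter; on
   'I_n these are the sets counted by pi_n, t(n) and c(n). *)
Definition bad_graphs (V : finType) := [set E in graphs_on V | ~~ inTb E].
Definition good_graphs (V : finType) := [set E in graphs_on V | inTb E].
Definition good_cliques (X : finType) := \sum_(G in good_graphs X) ncliques G.

Lemma good_cliques_le (X : finType) : good_cliques X <= all_cliques X.
Proof.
rewrite /good_cliques /all_cliques [leqRHS](big_setID (good_graphs X)) /=.
have /setIidPr -> : good_graphs X \subset graphs_on X.
  by apply/subsetP => G; rewrite inE => /andP [].
exact: leq_addr.
Qed.

Lemma card_graphs_on_true (T : finType) : #|[set G in graphs_on T | true]| = #|graphs_on T|.
Proof. by apply: eq_card => G; rewrite !inE andbT. Qed.

Lemma card_le_cover (T : finType) (A : {set T}) (Bs : seq {set T}) :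
  A \subset \bigcup_(B <- Bs) B -> #|A| <= \sum_(B <- Bs) #|B|.
Proof.
move=> cover; apply: leq_trans (subset_leq_card cover) _.
elim: Bs {cover} => [|B Bs IH]; first by rewrite !big_nil cards0.
by rewrite !big_cons (leq_trans (leq_card_setU _ _).1) // leq_add2l.
Qed.

Section Splitting.

Variables (V X Y : finType) (i1 : X -> V) (i2 : Y -> V).
Hypotheses (i1_inj : injective i1) (i2_inj : injective i2)
  (i12_disj : forall x y, i1 x != i2 y)
  (i12_cover : forall u, (exists x, u = i1 x) \/ (exists y, u = i2 y)).

Definition link (E : {set {set V}}) (y : Y) : {set X} :=
  [set x | adj E (i1 x) (i2 y)].

Definition clique_linked (E : {set {set V}}) : bool :=
  [exists y, is_clique (pull i1 E) (link E y)].

(* A graph outside T whose X-part is in T is clique-linked, by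
   [inT_extend] applied to the range of i1. *)
Lemma clique_linked_of_notT E :
  is_graph E -> ~~ inTb E -> inTb (pull i1 E) -> clique_linked E.
Proof.
move=> gE /inTbP nT /inTbP T1; case: (boolP (clique_linked E)) => // /existsPn ncl.
case: nT; apply: (inT_extend gE); first exact/(inT_pull_induced i1_inj gE).
move=> v vX; case: (i12_cover v) => [[x Dv] | [y ->]].
  by rewrite Dv imset_f in vX.
case/noncliqueP: (ncl y) => x [x' [xy x'y xx' nxx']].
apply/noncliqueP; exists (i1 x), (i1 x'); rewrite -adj_pull (inj_eq i1_inj) xx' nxx'.
by move: xy x'y; rewrite !inE !imset_f //= ![adj E (i2 y) _]adjC => -> ->.
Qed.

Definition cross (E : {set {set V}}) : {set X * Y} :=
  [set p | [set i1 p.1; i2 p.2] \in E].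

Definition split_graph (E : {set {set V}}) := (pull i1 E, pull i2 E, cross E).

Definition join_graph (t : {set {set X}} * {set {set Y}} * {set X * Y}) :=
  [set i1 @: s | s : {set X} in t.1.1] :|: [set i2 @: s | s : {set Y} in t.1.2]
  :|: [set [set i1 p.1; i2 p.2] | p in t.2].

Definition split_triples := setX (setX (graphs_on X) (graphs_on Y)) [set: {set X * Y}].

Lemma i2_notin_i1 y (s : {set X}) : (i2 y \in i1 @: s) = false.
Proof. by apply/imsetP => -[x _ e]; move: (i12_disj x y); rewrite e eqxx. Qed.

Lemma i1_notin_i2 x (s : {set Y}) : (i1 x \in i2 @: s) = false.
Proof. by apply/imsetP => -[y _ e]; move: (i12_disj x y); rewrite e eqxx. Qed.

Lemma join_split E : is_graph E -> join_graph (split_graph E) = E.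
Proof.
move=> gE; apply/setP => s; apply/idP/idP.
  by rewrite !inE => /orP [/orP [] |] /imsetP [t]; rewrite ?inE => tE ->.
move=> sE; have [a [b [ab Ds]]] := graph_edge gE sE; subst s.
rewrite !inE; move: sE ab.
case: (i12_cover a) => [[x ->]|[y ->]]; case: (i12_cover b) => [[x' ->]|[y' ->]] => sE ab.
- apply/orP; left; apply/orP; left; apply/imsetP; exists [set x; x'].
    by rewrite inE imsetU1 imset_set1.
  by rewrite imsetU1 imset_set1.
- by apply/orP; right; apply/imsetP; exists (x, y'); rewrite ?inE.
- apply/orP; right; apply/imsetP; exists (x', y); last by rewrite setUC.
  by rewrite inE /= setUC.
- apply/orP; left; apply/orP; right; apply/imsetP; exists [set y; y'].
    by rewrite inE imsetU1 imset_set1.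
  by rewrite imsetU1 imset_set1.
Qed.

Lemma split_join t : t \in split_triples -> split_graph (join_graph t) = t.
Proof.
case: t => [[G H] r]; rewrite !inE /= andbT => /andP [gG gH].
congr (_, _, _); apply/setP => s; rewrite !inE /=.
- rewrite mem_imset; last exact: imset_inj.
  have -> : (i1 @: s \in [set i2 @: s0 | s0 : {set Y} in H]) = false.
    apply/imsetP => -[u uH e]; have [y yu] := graph_nonempty gH uH.
    by have := imset_f i2 yu; rewrite -e i2_notin_i1.
  have -> : (i1 @: s \in [set [set i1 p.1; i2 p.2] | p in r]) = false.
    apply/imsetP => -[p _ e].
    by have := setU1r (i1 p.1) (set11 (i2 p.2)); rewrite -e i2_notin_i1.
  by rewrite !orbF.
- rewrite (mem_imset _ _ (imset_inj i2_inj)).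
  have -> : (i2 @: s \in [set i1 @: s0 | s0 : {set X} in G]) = false.
    apply/imsetP => -[u uG e]; have [x xu] := graph_nonempty gG uG.
    by have := imset_f i1 xu; rewrite -e i1_notin_i2.
  have -> : (i2 @: s \in [set [set i1 p.1; i2 p.2] | p in r]) = false.
    apply/imsetP => -[p _ e].
    by have := setU11 (i1 p.1) [set i2 p.2]; rewrite -e i1_notin_i2.
  by rewrite !orbF.
case: s => x y /=.
have -> : ([set i1 x; i2 y] \in [set i1 @: s0 | s0 : {set X} in G]) = false.
  apply/imsetP => -[u _ e].
  by have := setU1r (i1 x) (set11 (i2 y)); rewrite e i2_notin_i1.
have -> : ([set i1 x; i2 y] \in [set i2 @: s0 | s0 : {set Y} in H]) = false.
  apply/imsetP => -[u _ e].
  by have := setU11 (i1 x) [set i2 y]; rewrite e i1_notin_i2.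
apply/imsetP/idP => [[[x' y'] xy' e] | xy]; last by exists (x, y).
have := setU11 (i1 x) [set i2 y]; rewrite e !inE /= (negbTE (i12_disj _ _)) orbF.
move/eqP/i1_inj => ex; subst x'.
have := setU1r (i1 x) (set11 (i2 y)); rewrite e !inE /= eq_sym (negbTE (i12_disj _ _)).
by move/eqP/i2_inj => ey; subst y'.
Qed.

Lemma graph_join t : t \in split_triples -> is_graph (join_graph t).
Proof.
case: t => [[G H] r]; rewrite !inE /= andbT => /andP [/forall_inP gG /forall_inP gH].
apply/forall_inP => s; rewrite !inE => /orP [/orP [] |] /imsetP [u uin ->].
- by rewrite card_imset // gG.
- by rewrite card_imset // gH.
by rewrite cards2 i12_disj.
Qed.

Lemma count_split (Q : pred ({set {set X}} * {set {set Y}} * {set X * Y})) :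
  #|[set E in graphs_on V | Q (split_graph E)]| = #|[set t in split_triples | Q t]|.
Proof.
have split_inj : {in [set E in graphs_on V | Q (split_graph E)] &, injective split_graph}.
  move=> E E'; rewrite !inE => /andP [gE _] /andP [gE' _] e.
  by rewrite -(join_split gE) e join_split.
rewrite -(card_in_imset split_inj); apply: eq_card => t; apply/imsetP/idP.
  move=> [E]; rewrite !inE => /andP [gE QE] ->; rewrite QE andbT.
  by rewrite /split_graph /= !graph_pull.
rewrite inE => /andP [tT Qt]; exists (join_graph t); last by rewrite split_join.
by rewrite !inE graph_join //= split_join.
Qed.

(* Prescribing only the two parts leaves all |X||Y| crossing pairs free. *)
Lemma count_parts (P1 : pred {set {set X}}) (P2 : pred {set {set Y}}) :
  #|[set E in graphs_on V | P1 (pull i1 E) && P2 (pull i2 E)]| =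
  #|[set G in graphs_on X | P1 G]| * #|[set H in graphs_on Y | P2 H]| * 2 ^ (#|X| * #|Y|).
Proof.
rewrite (count_split (fun t => P1 t.1.1 && P2 t.1.2)).
have -> : [set t in split_triples | P1 t.1.1 && P2 t.1.2] =
    setX (setX [set G in graphs_on X | P1 G] [set H in graphs_on Y | P2 H]) [set: {set X * Y}].
  apply/setP => -[[G H] r]; rewrite !inE /= andbT.
  by case: (is_graph G); case: (is_graph H); case: (P1 G); case: (P2 H).
by rewrite !cardsX cardsT card_sets card_prod.
Qed.

(* For a fixed y, the triples in which y is linked to a clique of the
   X-part: the X-part and the Y-part are free, and the column of y is one
   of the cliques of the X-part. *)
Lemma count_clique_link_at (P1 : pred {set {set X}}) (P2 : pred {set {set Y}}) y :
  #|[set t in split_triples | P1 t.1.1 && P2 t.1.2 && is_clique t.1.1 (column t.2 y)]| =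
  #|[set H in graphs_on Y | P2 H]| * (\sum_(G in [set G in graphs_on X | P1 G]) ncliques G)
    * 2 ^ (#|X| * #|Y| - #|X|).
Proof.
set k := 2 ^ _.
pose okX G := (G \in graphs_on X) && P1 G; pose okY H := (H \in graphs_on Y) && P2 H.
have fiber G H : #|[set r | ((G, H, r) \in split_triples) &&
      (P1 G && P2 H && is_clique G (column r y))]| = okX G * okY H * (ncliques G * k).
  rewrite /okX /okY; case: (boolP (okX G && okY H)) => [|nok].
    case/andP => /andP [gG PG] /andP [gH PH].
    rewrite gG PG gH PH mul1n /ncliques /k -(card_column_in y); apply: eq_card => r.
    by move: gG gH; rewrite !inE => -> ->.
  rewrite mulnb (negbTE nok) mul0n; apply/eqP; rewrite cards_eq0; apply/eqP/setP => r.
  rewrite !inE /= andbT; apply/negbTE; apply: contra nok; rewrite /okX /okY !inE.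
  by case/and3P => /andP [-> ->] /andP [-> ->].
rewrite card_pair (eq_bigr (fun gh => okX gh.1 * okY gh.2 * (ncliques gh.1 * k))); last first.
  by move=> [G H] _; rewrite -fiber.
rewrite -(pair_bigA _ (fun G H => okX G * okY H * (ncliques G * k))) /=.
rewrite (eq_bigr (fun G => okX G * ncliques G * k * \sum_H okY H)); last first.
  by move=> G _; rewrite big_distrr /=; apply: eq_bigr => H _; rewrite mulnAC mulnA.
rewrite -big_distrl /= -big_distrl /= mulnC -card_set_sum mulnA.
congr (_ * _ * _); rewrite [RHS]big_mkcond; apply: eq_bigr => G _.
by rewrite inE mulnbl.
Qed.

(* The clique-linked graphs with prescribed parts: a union bound over y. *)
Lemma count_clique_linked (P1 : pred {set {set X}}) (P2 : pred {set {set Y}}) :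
  #|[set E in graphs_on V | P1 (pull i1 E) && P2 (pull i2 E) && clique_linked E]| <=
  #|Y| * #|[set H in graphs_on Y | P2 H]| *
    (\sum_(G in [set G in graphs_on X | P1 G]) ncliques G) * 2 ^ (#|X| * #|Y| - #|X|).
Proof.
pose Q (t : {set {set X}} * {set {set Y}} * {set X * Y}) :=
  P1 t.1.1 && P2 t.1.2 && [exists y, is_clique t.1.1 (column t.2 y)].
have -> : #|[set E in graphs_on V | P1 (pull i1 E) && P2 (pull i2 E) && clique_linked E]|
    = #|[set E in graphs_on V | Q (split_graph E)]|.
  apply: eq_card => E; rewrite !inE; congr (_ && (_ && _)); apply: eq_existsb => y.
  by congr (is_clique _ _); apply/setP => x; rewrite !inE.
rewrite count_split; apply: (@leq_trans (\sum_y #|[set t in split_triples |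
    P1 t.1.1 && P2 t.1.2 && is_clique t.1.1 (column t.2 y)]|)).
  apply: leq_trans (card_exists_le _); apply: subset_leq_card; apply/subsetP => t.
  rewrite !inE => /andP [tT /andP [PP /existsP [y cl]]].
  by apply/existsP; exists y; rewrite tT PP cl.
by rewrite (eq_bigr _ (fun y _ => count_clique_link_at P1 P2 y)) sum_nat_const !mulnA.
Qed.

Lemma card_graphs_split :
  #|graphs_on V| = #|graphs_on X| * #|graphs_on Y| * 2 ^ (#|X| * #|Y|).
Proof.
have := count_parts xpredT xpredT.
by rewrite !card_graphs_on_true.
Qed.

Lemma card_bad_parts :
  #|[set E in graphs_on V | ~~ inTb (pull i1 E) && ~~ inTb (pull i2 E)]| =
  #|bad_graphs X| * #|bad_graphs Y| * 2 ^ (#|X| * #|Y|).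
Proof. exact: count_parts. Qed.

Lemma card_bad_first :
  #|[set E in graphs_on V | ~~ inTb (pull i1 E)]| =
  #|bad_graphs X| * #|graphs_on Y| * 2 ^ (#|X| * #|Y|).
Proof.
rewrite -card_graphs_on_true -count_parts.
by apply: eq_card => E; rewrite !inE andbT.
Qed.

Lemma count_good_linked :
  #|[set E in graphs_on V | inTb (pull i1 E) && clique_linked E]| <=
  #|Y| * #|graphs_on Y| * all_cliques X * 2 ^ (#|X| * #|Y| - #|X|).
Proof.
apply: (@leq_trans (#|Y| * #|graphs_on Y| * good_cliques X * 2 ^ (#|X| * #|Y| - #|X|))).
  have := count_clique_linked (fun G => inTb G) xpredT.
  rewrite card_graphs_on_true; apply: leq_trans; apply: eq_leq.
  by apply: eq_card => E; rewrite !inE andbT.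
by rewrite leq_mul2r leq_mul2l good_cliques_le !orbT.
Qed.

End Splitting.

Section SplitBounds.

Variables (V X Y : finType) (i1 : X -> V) (i2 : Y -> V).
Hypotheses (i1_inj : injective i1) (i2_inj : injective i2)
  (i12_disj : forall x y, i1 x != i2 y)
  (i12_cover : forall u, (exists x, u = i1 x) \/ (exists y, u = i2 y)).

Let i21_disj y x : i2 y != i1 x. Proof. by rewrite eq_sym. Qed.
Let i21_cover u : (exists y, u = i2 y) \/ (exists x, u = i1 x).
Proof. by case: (i12_cover u); [right | left]. Qed.

Let good_linked12 := count_good_linked i1_inj i2_inj i12_disj i12_cover.
Let good_linked21 := count_good_linked i2_inj i1_inj i21_disj i21_cover.
Let linked12 := count_clique_linked i1_inj i2_inj i12_disj i12_cover.
Let linked21 := count_clique_linked i2_inj i1_inj i21_disj i21_cover.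

(* Bound (1): a bad graph has both parts bad, or a good part which is
   clique-linked to the other side. *)
Lemma bad_split_le :
  #|bad_graphs V| <= #|bad_graphs X| * #|bad_graphs Y| * 2 ^ (#|X| * #|Y|)
    + #|Y| * #|graphs_on Y| * all_cliques X * 2 ^ (#|X| * #|Y| - #|X|)
    + #|X| * #|graphs_on X| * all_cliques Y * 2 ^ (#|Y| * #|X| - #|Y|).
Proof.
pose BB := [set E in graphs_on V | ~~ inTb (pull i1 E) && ~~ inTb (pull i2 E)].
pose L12 := [set E in graphs_on V | inTb (pull i1 E) && clique_linked i1 i2 E].
pose L21 := [set E in graphs_on V | inTb (pull i2 E) && clique_linked i2 i1 E].
apply: leq_trans (card_le_cover (Bs := [:: BB; L12; L21]) _) _.
  apply/subsetP => E; rewrite !big_cons big_nil setU0 !inE => /andP [gE nT]; rewrite gE /=.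
  case T1 : (inTb (pull i1 E)).
    by rewrite (clique_linked_of_notT i1_inj i12_cover gE nT T1) orbT.
  case T2 : (inTb (pull i2 E)); last by [].
  by rewrite (clique_linked_of_notT i2_inj i21_cover gE nT T2) !orbT.
rewrite !big_cons big_nil addn0 (card_bad_parts i1_inj i2_inj i12_disj i12_cover) -addnA.
by rewrite leq_add2l leq_add // ?good_linked12 ?good_linked21.
Qed.

(* Bound (2): as (1), but a graph with both parts good is counted apart. *)
Lemma bad_split_fine_le :
  #|bad_graphs V| <= #|bad_graphs X| * #|bad_graphs Y| * 2 ^ (#|X| * #|Y|)
    + #|Y| * #|bad_graphs Y| * good_cliques X * 2 ^ (#|X| * #|Y| - #|X|)
    + #|X| * #|bad_graphs X| * good_cliques Y * 2 ^ (#|Y| * #|X| - #|Y|)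
    + #|good_graphs X| * #|good_graphs Y| * 2 ^ (#|X| * #|Y|).
Proof.
pose BB := [set E in graphs_on V | ~~ inTb (pull i1 E) && ~~ inTb (pull i2 E)].
pose L12 := [set E in graphs_on V |
  inTb (pull i1 E) && ~~ inTb (pull i2 E) && clique_linked i1 i2 E].
pose L21 := [set E in graphs_on V |
  inTb (pull i2 E) && ~~ inTb (pull i1 E) && clique_linked i2 i1 E].
pose GG := [set E in graphs_on V | inTb (pull i1 E) && inTb (pull i2 E)].
apply: leq_trans (card_le_cover (Bs := [:: BB; L12; L21; GG]) _) _.
  apply/subsetP => E; rewrite !big_cons big_nil setU0 !inE => /andP [gE nT]; rewrite gE /=.
  case T1 : (inTb (pull i1 E)); case T2 : (inTb (pull i2 E)); rewrite ?orbT //=.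
    by rewrite (clique_linked_of_notT i1_inj i12_cover gE nT T1).
  by rewrite (clique_linked_of_notT i2_inj i21_cover gE nT T2).
rewrite !big_cons big_nil addn0 (card_bad_parts i1_inj i2_inj i12_disj i12_cover) !addnA.
rewrite (count_parts i1_inj i2_inj i12_disj i12_cover (fun G => inTb G) (fun G => inTb G)).
rewrite leq_add2r -!addnA leq_add2l leq_add //.
  exact: (linked12 (fun G => inTb G) (fun G => ~~ inTb G)).
exact: (linked21 (fun G => inTb G) (fun G => ~~ inTb G)).
Qed.

(* Bound (3): a bad graph has a bad X-part, or a good X-part which is
   clique-linked to Y. *)
Lemma bad_extend_le :
  #|bad_graphs V| <= #|bad_graphs X| * #|graphs_on Y| * 2 ^ (#|X| * #|Y|)
    + #|Y| * #|graphs_on Y| * all_cliques X * 2 ^ (#|X| * #|Y| - #|X|).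
Proof.
pose B1 := [set E in graphs_on V | ~~ inTb (pull i1 E)].
pose L12 := [set E in graphs_on V | inTb (pull i1 E) && clique_linked i1 i2 E].
apply: leq_trans (card_le_cover (Bs := [:: B1; L12]) _) _.
  apply/subsetP => E; rewrite !big_cons big_nil setU0 !inE => /andP [gE nT]; rewrite gE /=.
  case T1 : (inTb (pull i1 E)); last by [].
  by rewrite (clique_linked_of_notT i1_inj i12_cover gE nT T1).
rewrite !big_cons big_nil addn0 (card_bad_first i1_inj i2_inj i12_disj i12_cover) leq_add2l.
exact: good_linked12.
Qed.

End SplitBounds.

Section OrdinalSplit.

Variables (m k N : nat) (eN : m + k = N).

Definition ord_left (x : 'I_m) : 'I_N := cast_ord eN (lshift k x).
Definition ord_right (y : 'I_k) : 'I_N := cast_ord eN (rshift m y).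

Lemma ord_left_inj : injective ord_left.
Proof. by move=> x x' /cast_ord_inj /lshift_inj. Qed.

Lemma ord_right_inj : injective ord_right.
Proof. by move=> y y' /cast_ord_inj /rshift_inj. Qed.

Lemma ord_left_right x y : ord_left x != ord_right y.
Proof. by rewrite (inj_eq (@cast_ord_inj _ _ eN)) eq_lrshift. Qed.

Lemma ord_split_cover u : (exists x, u = ord_left x) \/ (exists y, u = ord_right y).
Proof.
rewrite -[u](cast_ordKV eN) -(splitK (cast_ord (esym eN) u)).
by case: split => [x | y]; [left; exists x | right; exists y].
Qed.

End OrdinalSplit.

Arguments ord_left_inj {m k N} eN.
Arguments ord_right_inj {m k N} eN.
Arguments ord_left_right {m k N} eN.
Arguments ord_split_cover {m k N} eN.

Lemma expn_square_split n : 2 ^ (n * n) = 2 ^ (n * n - n) * 2 ^ n.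
Proof. by rewrite -expnD subnK //; nia. Qed.

Lemma double_split n : n + n = 2 * n. Proof. by rewrite mul2n addnn. Qed.

Local Open Scope ring_scope.

Lemma sum_by_card (R : pzSemiRingType) (X : finType) (F : nat -> R) :
  \sum_(S : {set X}) F #|S| = \sum_(i < #|X|.+1) 'C(#|X|, i)%:R * F i.
Proof.
rewrite (partition_big (fun S : {set X} => (inord #|S| : 'I_#|X|.+1)) xpredT) //=.
apply: eq_bigr => i _.
rewrite (eq_bigl (fun S : {set X} => #|S| == i)) => [|S]; last first.
  by rewrite -val_eqE /= inordK // ltnS max_card.
rewrite (eq_bigr (fun _ => F i)) => [|S /eqP -> //].
rewrite sumr_const -card_draws mulr_natl; congr (_ *+ _).
by apply: eq_card => S; rewrite inE.
Qed.

Definition mean_cliques (m : nat) : rat := \sum_(i < m.+1) 'C(m, i)%:R / (2 ^ 'C(i, 2))%:R.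

Lemma all_cliquesE (X : finType) :
  (all_cliques X)%:R = #|graphs_on X|%:R * mean_cliques #|X|.
Proof.
rewrite all_cliques_exchange natr_sum.
rewrite (eq_bigr (fun S : {set X} => #|graphs_on X|%:R / (2 ^ 'C(#|S|, 2))%:R)) => [|S _].
  rewrite (@sum_by_card _ X (fun i => #|graphs_on X|%:R / (2 ^ 'C(i, 2))%:R)) /mean_cliques.
  by rewrite big_distrr /=; apply: eq_bigr => i _; rewrite mulrCA.
by rewrite -(card_graphs_with_clique S) natrM mulfK // pnatr_eq0 expn_eq0.
Qed.

Lemma pi_nE m : pi_n m = #|bad_graphs 'I_m|%:R / #|graphs_on 'I_m|%:R.
Proof. by []. Qed.

Lemma fnE n : fn n = (2 * n)%:R * mean_cliques n / (2 ^ n)%:R.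
Proof.
rewrite /fn /mean_cliques -mulrA big_distrl /=; congr (_ * _); apply: eq_bigr => i _.
by rewrite expnD natrM invfM !mulrA mulrAC.
Qed.

Lemma card_graphs_neq0 (X : finType) : #|graphs_on X|%:R != 0 :> rat.
Proof. by rewrite pnatr_eq0 -lt0n graphs_on_gt0. Qed.

Lemma pow2_neq0 m : (2 ^ m)%:R != 0 :> rat.
Proof. by rewrite pnatr_eq0 expn_eq0. Qed.

Lemma ler_of_eq (x y : rat) : x = y -> x <= y.
Proof. by move->. Qed.

Lemma pi_le m (r : rat) :
  #|bad_graphs 'I_m|%:R <= r * #|graphs_on 'I_m|%:R -> pi_n m <= r.
Proof. by rewrite pi_nE ler_pdivrMr // ltr0n graphs_on_gt0. Qed.

(* Inequality (1), from the two-sided bound on 'I_(2n) = 'I_n + 'I_n. *)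
Lemma pi_double_le n : pi_n (2 * n) <= pi_n n ^+ 2 + fn n.
Proof.
have eN := double_split n.
have [[[l r] lr] cov] :=
  (ord_left_inj eN, ord_right_inj eN, ord_left_right eN, ord_split_cover eN).
apply: pi_le; have := bad_split_le l r lr cov; rewrite -(ler_nat rat) => /le_trans; apply.
rewrite (card_graphs_split l r lr cov) !card_ord expn_square_split !natrD !natrM.
rewrite all_cliquesE card_ord fnE pi_nE; apply: ler_of_eq.
by field; rewrite card_graphs_neq0 pow2_neq0.
Qed.

Lemma card_bad_good (V : finType) :
  (#|bad_graphs V| + #|good_graphs V| = #|graphs_on V|)%N.
Proof.
rewrite addnC -(cardsID [set E | inTb E] (graphs_on V)).
by congr (_ + _)%N; apply: eq_card => E; rewrite !inE andbC.
Qed.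

Lemma one_sub_pi n : 1 - pi_n n = #|good_graphs 'I_n|%:R / #|graphs_on 'I_n|%:R.
Proof.
rewrite pi_nE -(card_bad_good 'I_n) natrD.
by field; rewrite -natrD card_bad_good card_graphs_neq0.
Qed.

(* Inequality (2), from the refined two-sided bound; when no graph on 'I_n
   is in T, both sides lose their middle term. *)
Lemma pi_double_fine_le n :
  pi_n (2 * n) <= pi_n n ^+ 2
    + 2%:R * pi_n n * (1 - pi_n n) * ((n * ccount n)%:R / ((2 ^ n * tcount n)%:R))
    + (1 - pi_n n) ^+ 2.
Proof.
have eN := double_split n.
have [[[l r] lr] cov] :=
  (ord_left_inj eN, ord_right_inj eN, ord_left_right eN, ord_split_cover eN).
apply: pi_le; have := bad_split_fine_le l r lr cov; rewrite -(ler_nat rat) => /le_trans; apply.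
rewrite (card_graphs_split l r lr cov) !card_ord expn_square_split !natrD !natrM.
rewrite one_sub_pi pi_nE -[tcount n]/#|good_graphs 'I_n| -[ccount n]/(good_cliques 'I_n).
apply: ler_of_eq.
have [t0 | t_gt0] := posnP #|good_graphs 'I_n|.
  have c0 : good_cliques 'I_n = 0%N by rewrite /good_cliques (cards0_eq t0) big_set0.
  rewrite t0 c0 !(mulr0, mul0r, invr0, addr0).
  by field; rewrite card_graphs_neq0.
have t0 : #|good_graphs 'I_n|%:R != 0 :> rat by rewrite pnatr_eq0 -lt0n.
by field; rewrite card_graphs_neq0 pow2_neq0 t0.
Qed.

Lemma pi_le1 m : pi_n m <= 1.
Proof.
apply: pi_le; rewrite mul1r ler_nat.
by apply: subset_leq_card; apply/subsetP => E; rewrite inE => /andP [].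
Qed.

(* No graph on zero vertices is in T, as graphs in T are not complete. *)
Lemma pi_0 : pi_n 0 = 1.
Proof.
rewrite pi_nE; have -> : bad_graphs 'I_0 = graphs_on 'I_0.
  apply/setP => E; rewrite !inE; case: (is_graph E) => //=.
  by apply/negP; move/inTbP/inT_noncomplete => [[x x_lt0] _].
by rewrite divff // card_graphs_neq0.
Qed.

(* Inequality (3), from the one-sided bound on 'I_(n+1) = 'I_n + 'I_1: the
   clique term is |'I_1| = 1 times the mean number of cliques, which is at
   most 2n times it as soon as n > 0. *)
Lemma pi_succ_le n : pi_n n.+1 <= pi_n n + fn n.
Proof.
case: n => [|n]; first by rewrite pi_0 /fn mul0r addr0 pi_le1.
have eN := addn1 n.+1.
have [[[l r] lr] cov] :=
  (ord_left_inj eN, ord_right_inj eN, ord_left_right eN, ord_split_cover eN).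
apply: pi_le; have := bad_extend_le l r lr cov; rewrite -(ler_nat rat) => /le_trans; apply.
rewrite (card_graphs_split l r lr cov) !card_ord muln1 subnn expn0 mul1n muln1.
rewrite !natrD !natrM all_cliquesE card_ord fnE pi_nE mulrDl.
set N := #|graphs_on 'I_n.+1|%:R; set N1 := #|graphs_on 'I_1|%:R; set s := mean_cliques n.+1.
apply: lerD; first by apply: ler_of_eq; field; rewrite card_graphs_neq0.
have -> : (2 * n.+1)%:R * s / (2 ^ n.+1)%:R * (N * N1 * (2 ^ n.+1)%:R)
    = (2 * n.+1)%:R * (N1 * (N * s)) by field; rewrite pow2_neq0.
have s_ge0 : 0 <= s by apply: sumr_ge0 => i _; rewrite divr_ge0 ?ler0n.
by rewrite ler_peMl ?mulr_ge0 ?ler0n // ler1n muln_gt0.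
Qed.

Theorem lemma3p11 (n : nat) :
  [/\ pi_n (2 * n) <= pi_n n ^+ 2 + fn n,
      pi_n (2 * n) <= pi_n n ^+ 2
        + 2%:R * pi_n n * (1 - pi_n n)
            * ((n * ccount n)%:R / ((2 ^ n * tcount n)%:R))
        + (1 - pi_n n) ^+ 2
    & pi_n n.+1 <= pi_n n + fn n].
Proof. by split; [exact: pi_double_le | exact: pi_double_fine_le | exact: pi_succ_le]. Qed.
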